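(* Let $\mathrm{Var}$ be a variety of algebras with one binary multiplication defined by multilinear identities. If a multilinear polynomial $f$ in the operations $\prec,\succ$ is an identity of all algebras over the operad $\mathrm{Var}\circ\mathrm{Nov}$ (under the identification described below), then $f$ is a derived identity of $\mathrm{Var}$.
   Context: For an algebra $A$ with derivation $d$, $A^{(d)}=(A,\prec,\succ)$ with $x\prec y=x\,d(y)$, $x\succ y=d(x)\,y$; $f$ is a derived identity of $\mathrm{Var}$ if $f=0$ on $A^{(d)}$ for all $A\in\mathrm{Var}$ and all derivations $d$ of $A$. The operad $\mathrm{Var}$ has components $\mathrm{Var}(n)$ = multilinear elements of degree $n$ in the free $\mathrm{Var}$-algebra on $x_1,x_2,\dots$. $\mathrm{Nov}$ is the operad of Novikov algebras: one operation $\circ$ with $(a\circ b)\circ c-a\circ(b\circ c)=(b\circ a)\circ c-b\circ(a\circ c)$ and $(a\circ b)\circ c=(a\circ c)\circ b$. The Hadamard product $\mathcal P\otimes\mathcal Q$ has components $\mathcal P(n)\otimes\mathcal Q(n)$ with componentwise composition; the Manin white product $\mathcal P\circ\mathcal Q$ is the suboperad generated by $\mathcal P(2)\otimes\mathcal Q(2)$. The operations of $\mathrm{Var}\circ\mathrm{Nov}$ are identified as $x_1\prec x_2=x_1x_2\otimes(x_1\circ x_2)$, $x_1\succ x_2=x_1x_2\otimes(x_2\circ x_1)$. *)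

From HB Require Import structures.
From mathcomp Require Import all_boot all_order all_algebra.
Set Implicit Arguments. Unset Strict Implicit. Unset Printing Implicit Defensive.
Import Order.TTheory GRing.Theory Num.Theory.
Local Open Scope ring_scope.

Inductive mterm := MVar of nat | MMul of mterm & mterm.
Inductive dterm := DVar of nat | DPrec of dterm & dterm | DSucc of dterm & dterm.

Fixpoint mleaves (t : mterm) : seq nat :=
  match t with MVar i => [:: i] | MMul a b => mleaves a ++ mleaves b end.
Fixpoint dleaves (t : dterm) : seq nat :=
  match t with
  | DVar i => [:: i]
  | DPrec a b => dleaves a ++ dleaves b
  | DSucc a b => dleaves a ++ dleaves b end.

Definition mpoly (K : fieldType) := seq (K * mterm).
Definition dpoly (K : fieldType) := seq (K * dterm).

Definition mmultilinear (K : fieldType) (n : nat) (f : mpoly K) : Prop :=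
  all (fun p => perm_eq (mleaves p.2) (iota 0 n)) f.
Definition dmultilinear (K : fieldType) (n : nat) (f : dpoly K) : Prop :=
  all (fun p => perm_eq (dleaves p.2) (iota 0 n)) f.

Record algebra (K : fieldType) := Algebra {
  carrier :> lmodType K;
  amul : carrier -> carrier -> carrier;
  amulDl : forall a b c, amul (a + b) c = amul a c + amul b c;
  amulDr : forall a b c, amul a (b + c) = amul a b + amul a c;
  amulZl : forall (k : K) a b, amul (k *: a) b = k *: amul a b;
  amulZr : forall (k : K) a b, amul a (k *: b) = k *: amul a b
}.

Fixpoint meval (K : fieldType) (A : algebra K) (x : nat -> A) (t : mterm) : A :=
  match t with
  | MVar i => x i
  | MMul a b => amul (meval x a) (meval x b)
  end.

Definition mpeval (K : fieldType) (A : algebra K) (x : nat -> A) (f : mpoly K) : A :=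
  \sum_(p <- f) p.1 *: meval x p.2.

Definition is_identity (K : fieldType) (A : algebra K) (f : mpoly K) : Prop :=
  forall x : nat -> A, mpeval x f = 0.

Definition multilinear_set (K : fieldType) (S : mpoly K -> Prop) : Prop :=
  forall g, S g -> exists n, mmultilinear n g.

Definition in_variety (K : fieldType) (S : mpoly K -> Prop) (A : algebra K) : Prop :=
  forall g, S g -> is_identity A g.

Definition novikov (K : fieldType) (N : algebra K) : Prop :=
  (forall a b c : N,
     amul (amul a b) c - amul a (amul b c) = amul (amul b a) c - amul b (amul a c))
  /\ (forall a b c : N, amul (amul a b) c = amul (amul a c) b).

Definition derivation (K : fieldType) (A : algebra K) (d : A -> A) : Prop :=
  (forall (k : K) (a b : A), d (k *: a + b) = k *: d a + d b)
  /\ (forall a b : A, d (amul a b) = amul (d a) b + amul a (d b)).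

Fixpoint deval (K : fieldType) (A : algebra K) (d : A -> A) (x : nat -> A) (t : dterm) : A :=
  match t with
  | DVar i => x i
  | DPrec a b => amul (deval d x a) (d (deval d x b))
  | DSucc a b => amul (d (deval d x a)) (deval d x b)
  end.

Definition derived_identity (K : fieldType) (S : mpoly K -> Prop) (f : dpoly K) : Prop :=
  forall (A : algebra K) (d : A -> A), in_variety S A -> derivation d ->
  forall x : nat -> A, \sum_(p <- f) p.1 *: deval d x p.2 = 0.

(* The identification of Var o Nov inside Var (x) Nov:
   x1 prec x2 = x1x2 (x) (x1 o x2),  x1 succ x2 = x1x2 (x) (x2 o x1).
   to_pair t = (Var-component, Nov-component) of the monomial t. *)
Fixpoint to_pair (t : dterm) : mterm * mterm :=
  match t with
  | DVar i => (MVar i, MVar i)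
  | DPrec a b => (MMul (to_pair a).1 (to_pair b).1, MMul (to_pair a).2 (to_pair b).2)
  | DSucc a b => (MMul (to_pair a).1 (to_pair b).1, MMul (to_pair b).2 (to_pair a).2)
  end.

(* Since Var o Nov is a suboperad of
   Var (x) Nov, this says that the image of f in Var(n) (x) Nov(n) vanishes; equivalently
   f vanishes on every Hadamard product algebra A (x) N (A in Var, N Novikov).
   The tensor product A (x) N is expressed through its universal property:
   every bilinear map B : A -> N -> W kills the value of f at simple tensors
   a_i (x) u_i (which suffices as f is multilinear). *)
Definition bilinear_map (K : fieldType) (A N : algebra K) (W : lmodType K)
  (B : A -> N -> W) : Prop :=
  (forall u : N, forall (k : K) (a b : A), B (k *: a + b) u = k *: B a u + B b u)
  /\ (forall a : A, forall (k : K) (u v : N), B a (k *: u + v) = k *: B a u + B a v).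

Definition VarNov_identity (K : fieldType) (S : mpoly K -> Prop) (f : dpoly K) : Prop :=
  forall (A N : algebra K) (W : lmodType K) (B : A -> N -> W),
  in_variety S A -> novikov N -> bilinear_map B ->
  forall (a : nat -> A) (u : nat -> N),
  \sum_(p <- f) p.1 *: B (meval a (to_pair p.2).1) (meval u (to_pair p.2).2) = 0.

From HB Require Import structures.
From mathcomp Require Import all_boot all_order all_algebra.
From mathcomp Require Import mpoly.
From mathcomp Require Import boolp functions.
From mathcomp Require Import ring.
Import GRing.Theory.
Set Implicit Arguments. Unset Strict Implicit. Unset Printing Implicit Defensive.
Local Open Scope ring_scope.

(* Fix A in Var, a derivation d of A and x_0, ..., x_{n-1} in A.  In the
   polynomial ring P = K[z_j, y_j] the operator D = sum_j z_j y_j d/dy_j is a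
   derivation, so (P, u o v = u D(v)) is a Novikov algebra.  On the Novikov
   side the value of a multilinear monomial t at the y_j is a polynomial T_t
   with D(T_t) = (sum_(j in t) z_j) T_t.  On the Var side take the algebra of
   A-valued functions on the monomials of P (it satisfies every identity of A)
   and a_j(kappa) = d^(kappa(z_j)) x_j.  Pair a function F with a polynomial p
   by B(F, p) = sum_m p_m F(m): multiplying p by z_j then shifts the number of
   derivatives falling on x_j, so multiplication by sum_(j in t) z_j acts as d
   on the value of t by the Leibniz rule.  By induction on t, B sends the value
   of t in the Hadamard product to its value in A^(d) at the x_j, hence every
   identity of Var o Nov is a derived identity. *)

Lemma uniq_cat_notin (T : eqType) (s1 s2 : seq T) j :
  uniq (s1 ++ s2) -> j \in s1 -> j \notin s2.
Proof. by rewrite cat_uniq => /and3P [_ /hasPn s2Ns1 _] j1; apply: contraL j1 => /s2Ns1. Qed.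

Lemma eq_big_all (I : Type) (V : nmodType) (P : pred I) (F1 F2 : I -> V) (r : seq I) :
  all P r -> (forall i, P i -> F1 i = F2 i) ->
  \sum_(i <- r) F1 i = \sum_(i <- r) F2 i.
Proof.
move=> P_r eq_F; elim: r P_r => [|i r IH] /=; first by rewrite !big_nil.
by case/andP => P_i P_r; rewrite !big_cons eq_F // IH.
Qed.

Section MonomialPairing.
Variables (K : fieldType) (k : nat) (V : lmodType K).
Implicit Types (p q : {mpoly K[k]}) (F : 'X_{1..k} -> V).

Definition mpair F p : V := \sum_(m <- msupp p) p@_m *: F m.

Lemma mpair_superset F p (r : seq 'X_{1..k}) : uniq r -> {subset msupp p <= r} ->
  \sum_(m <- r) p@_m *: F m = mpair F p.
Proof.
move=> uniq_r supp_r; rewrite (bigID (mem (msupp p))) /=.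
rewrite [X in _ + X]big1 ?addr0; last first.
  by move=> m /memN_msupp_eq0 ->; rewrite scale0r.
rewrite -big_filter /mpair; apply/perm_big/uniq_perm.
- exact: filter_uniq.
- exact: msupp_uniq.
by move=> m; rewrite mem_filter andb_idr //; apply: supp_r.
Qed.

Lemma mpair_is_linear F : linear (mpair F).
Proof.
move=> c p q; set r := undup (msupp p ++ msupp q).
have uniq_r : uniq r by apply: undup_uniq.
have supp_p : {subset msupp p <= r} by move=> m mp; rewrite mem_undup mem_cat mp.
have supp_q : {subset msupp q <= r}.
  by move=> m mq; rewrite mem_undup mem_cat mq orbT.
have supp_pq : {subset msupp (c *: p + q) <= r}.
  by move=> m /msuppD_le; rewrite mem_cat => /orP [/msuppZ_le/supp_p | /supp_q].
rewrite -(mpair_superset F uniq_r supp_pq) -(mpair_superset F uniq_r supp_p).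
rewrite -(mpair_superset F uniq_r supp_q) scaler_sumr -big_split /=.
by apply: eq_bigr => m _; rewrite mcoeffD mcoeffZ scalerDl scalerA.
Qed.

HB.instance Definition _ F :=
  GRing.isLinear.Build K {mpoly K[k]} V _ (mpair F) (mpair_is_linear F).

Lemma mpairX F m : mpair F 'X_[m] = F m.
Proof. by rewrite /mpair msuppX big_seq1 mcoeffX eqxx scale1r. Qed.

Lemma mpairDl (c : K) F1 F2 p :
  mpair (c *: F1 + F2) p = c *: mpair F1 p + mpair F2 p.
Proof.
rewrite /mpair scaler_sumr -big_split /=; apply: eq_bigr => m _.
by rewrite scalerDr !scalerA mulrC.
Qed.

Definition mshift p F : 'X_{1..k} -> V := fun kappa => mpair (fun m => F (kappa + m)%MM) p.

Lemma mshiftX m F kappa : mshift 'X_[m] F kappa = F (kappa + m)%MM.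
Proof. exact: mpairX. Qed.

Lemma mshift_at0 p F : mshift p F 0%MM = mpair F p.
Proof. by rewrite /mshift; congr mpair; apply/funext => m; rewrite add0m. Qed.

Lemma mshiftM p q F : mshift (p * q) F = mshift p (mshift q F).
Proof.
apply/funext => kappa; rewrite /mshift {1}(mpolyE p) mulr_suml linear_sum.
rewrite [RHS]/mpair; apply: eq_bigr => m _; rewrite -scalerAl linearZ.
congr (_ *: _); rewrite {1}(mpolyE q) mulr_sumr linear_sum; apply: eq_bigr => e _.
by rewrite -scalerAr linearZ /= -mpolyXD mpairX addmA.
Qed.

End MonomialPairing.

Section AlgebraFacts.
Variables (K : fieldType) (A : algebra K).

Lemma amul0r (a : A) : amul 0 a = 0.
Proof. by have := amulZl 0 (0 : A) a; rewrite !scale0r. Qed.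

Lemma amulr0 (a : A) : amul a 0 = 0.
Proof. by have := amulZr 0 a (0 : A); rewrite !scale0r. Qed.

Lemma amul_suml (I : Type) (r : seq I) (F : I -> A) (a : A) :
  amul (\sum_(i <- r) F i) a = \sum_(i <- r) amul (F i) a.
Proof. by apply: (big_morph (fun b => amul b a)) => [b c|]; rewrite ?amulDl ?amul0r. Qed.

Lemma amul_sumr (I : Type) (r : seq I) (F : I -> A) (a : A) :
  amul a (\sum_(i <- r) F i) = \sum_(i <- r) amul a (F i).
Proof. by apply: (big_morph (amul a)) => [b c|]; rewrite ?amulDr ?amulr0. Qed.

End AlgebraFacts.

Section Derivations.
Variables (K : fieldType) (A : algebra K) (d : A -> A).
Hypothesis derivation_d : derivation d.

Lemma derivationD (a b : A) : d (a + b) = d a + d b.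
Proof. by have := (derivation_d.1 1 a b); rewrite !scale1r. Qed.

Lemma derivation0 : d 0 = 0.
Proof. by apply/(addIr (d 0)); rewrite -derivationD !add0r. Qed.

Lemma derivation_sum (I : Type) (r : seq I) (F : I -> A) :
  d (\sum_(i <- r) F i) = \sum_(i <- r) d (F i).
Proof. by apply: big_morph; [exact: derivationD | exact: derivation0]. Qed.

Lemma eq_deval (x y : nat -> A) t : {in dleaves t, x =1 y} ->
  deval d x t = deval d y t.
Proof.
elim: t => [i|t1 IH1 t2 IH2|t1 IH1 t2 IH2] /= eq_xy.
- by apply: eq_xy; rewrite mem_seq1.
- by rewrite IH1 ?IH2 // => j j_t; apply: eq_xy; rewrite mem_cat j_t ?orbT.
by rewrite IH1 ?IH2 // => j j_t; apply: eq_xy; rewrite mem_cat j_t ?orbT.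
Qed.

Definition derive_at (x : nat -> A) (j : nat) : nat -> A :=
  fun i => if i == j then d (x i) else x i.

Lemma derive_at_notin x j (L : seq nat) : j \notin L -> {in L, derive_at x j =1 x}.
Proof. by move=> jNL i iL; rewrite /derive_at; case: eqP iL => // ->; rewrite (negbTE jNL). Qed.

Lemma deval_derivation x t : uniq (dleaves t) ->
  d (deval d x t) = \sum_(j <- dleaves t) deval d (derive_at x j) t.
Proof.
elim: t x => [i|t1 IH1 t2 IH2|t1 IH1 t2 IH2] x /=.
- by rewrite big_seq1 /derive_at eqxx.
- move=> uniq_t; move: (uniq_t); rewrite cat_uniq => /and3P [uniq1 _ uniq2].
  rewrite big_cat derivation_d.2; congr (_ + _).
    rewrite IH1 // amul_suml; apply: eq_big_seq => j j_t1.
    by congr (amul _ (d _)); apply/esym/eq_deval/derive_at_notin/(uniq_cat_notin uniq_t).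
  rewrite IH2 // derivation_sum amul_sumr; apply: eq_big_seq => j j_t2.
  congr (amul _ _); apply/esym/eq_deval/derive_at_notin/(uniq_cat_notin _ j_t2).
  by rewrite uniq_catC.
move=> uniq_t; move: (uniq_t); rewrite cat_uniq => /and3P [uniq1 _ uniq2].
rewrite big_cat derivation_d.2; congr (_ + _).
  rewrite IH1 // derivation_sum amul_suml; apply: eq_big_seq => j j_t1.
  by congr (amul _ _); apply/esym/eq_deval/derive_at_notin/(uniq_cat_notin uniq_t).
rewrite IH2 // amul_sumr; apply: eq_big_seq => j j_t2.
congr (amul (d _) _); apply/esym/eq_deval/derive_at_notin/(uniq_cat_notin _ j_t2).
by rewrite uniq_catC.
Qed.

End Derivations.

Section PointwiseAlgebra.
Variables (K : fieldType) (A : algebra K) (T : Type).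

Definition fmul (F G : T -> A) : T -> A := fun s => amul (F s) (G s).

Lemma fmulDl (F G H : T -> A) : fmul (F + G) H = fmul F H + fmul G H.
Proof. by apply/funext => s; rewrite /fmul /= amulDl. Qed.

Lemma fmulDr (F G H : T -> A) : fmul F (G + H) = fmul F G + fmul F H.
Proof. by apply/funext => s; rewrite /fmul /= amulDr. Qed.

Lemma fmulZl (c : K) (F G : T -> A) : fmul (c *: F) G = c *: fmul F G.
Proof. by apply/funext => s; rewrite /fmul /= amulZl. Qed.

Lemma fmulZr (c : K) (F G : T -> A) : fmul F (c *: G) = c *: fmul F G.
Proof. by apply/funext => s; rewrite /fmul /= amulZr. Qed.

Definition fun_algebra : algebra K := Algebra fmulDl fmulDr fmulZl fmulZr.

Lemma meval_fun_algebra (x : nat -> fun_algebra) t (s : T) :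
  (meval x t : T -> A) s = meval (fun i => (x i : T -> A) s) t.
Proof. by elim: t => [i|a IHa b IHb] //=; rewrite /fmul IHa IHb. Qed.

Lemma fun_algebra_in_variety (S : mpoly K -> Prop) :
  in_variety S A -> in_variety S fun_algebra.
Proof.
move=> A_S g S_g x; apply/funext => s; rewrite /mpeval fct_sumE.
rewrite -[RHS](A_S g S_g (fun i => (x i : T -> A) s)).
by apply: eq_bigr => p _; rewrite -meval_fun_algebra.
Qed.

End PointwiseAlgebra.

Section NovikovOfDerivation.
Variables (K : fieldType) (R : comAlgType K) (D : {linear R -> R}).

Definition dmul (u v : R) : R := u * D v.

Lemma dmulDl u v w : dmul (u + v) w = dmul u w + dmul v w.
Proof. by rewrite /dmul mulrDl. Qed.

Lemma dmulDr u v w : dmul u (v + w) = dmul u v + dmul u w.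
Proof. by rewrite /dmul linearD mulrDr. Qed.

Lemma dmulZl (c : K) u v : dmul (c *: u) v = c *: dmul u v.
Proof. by rewrite /dmul scalerAl. Qed.

Lemma dmulZr (c : K) u v : dmul u (c *: v) = c *: dmul u v.
Proof. by rewrite /dmul linearZ scalerAr. Qed.

Definition novikov_of_derivation : algebra K := Algebra dmulDl dmulDr dmulZl dmulZr.

Lemma novikov_of_derivationP :
  (forall u v, D (u * v) = D u * v + u * D v) -> novikov novikov_of_derivation.
Proof. by move=> DM; split=> u v w; rewrite /= /dmul ?DM; ring. Qed.

End NovikovOfDerivation.

Section NovikovModel.
Variables (K : fieldType) (n : nat).

(* z_j is variable j and y_j is variable n + j; the extra variable only makes
   inord available. *)
Definition nvars := (n + n).+1.
Definition zvar (j : nat) : 'I_nvars := inord j.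
Definition yvar (j : nat) : 'I_nvars := inord (n + j).

Lemma zvar_val j : (j < n)%N -> zvar j = j :> nat.
Proof. by move=> j_lt; rewrite inordK // ltnS (leq_trans (ltnW j_lt)) ?leq_addr. Qed.

Lemma yvar_val j : (j < n)%N -> yvar j = (n + j)%N :> nat.
Proof. by move=> j_lt; rewrite inordK // ltnS leq_add2l ltnW. Qed.

Lemma eq_zvar i j : (i < n)%N -> (j < n)%N -> (zvar i == zvar j) = (i == j).
Proof. by move=> i_lt j_lt; rewrite -val_eqE /= !zvar_val. Qed.

Lemma eq_yvar i j : (i < n)%N -> (j < n)%N -> (yvar i == yvar j) = (i == j).
Proof. by move=> i_lt j_lt; rewrite -val_eqE /= !yvar_val // eqn_add2l. Qed.

Lemma yvar_neq_zvar i j : (i < n)%N -> (j < n)%N -> (yvar i == zvar j) = false.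
Proof.
move=> i_lt j_lt; rewrite -val_eqE /= yvar_val // zvar_val //.
by apply/negbTE; rewrite gtn_eqF // (leq_trans j_lt) // leq_addr.
Qed.

Implicit Types (p q : {mpoly K[nvars]}) (L : seq nat).

Definition zy_deriv p : {mpoly K[nvars]} :=
  \sum_(j <- iota 0 n) 'X_(zvar j) * 'X_(yvar j) * p^`M(yvar j).

Lemma zy_deriv_is_linear : linear zy_deriv.
Proof.
move=> c p q; rewrite /zy_deriv scaler_sumr -big_split; apply: eq_bigr => j _ /=.
by rewrite linearP mulrDr scalerAr.
Qed.

HB.instance Definition _ :=
  GRing.isLinear.Build K {mpoly K[nvars]} {mpoly K[nvars]} _ zy_deriv zy_deriv_is_linear.

Lemma zy_derivM p q : zy_deriv (p * q) = zy_deriv p * q + p * zy_deriv q.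
Proof.
rewrite /zy_deriv mulr_suml mulr_sumr -big_split; apply: eq_bigr => j _ /=.
by rewrite mderivM; ring.
Qed.

Lemma zy_deriv_zvar j : (j < n)%N -> zy_deriv 'X_(zvar j) = 0.
Proof.
move=> j_lt; rewrite /zy_deriv big1_seq // => i /andP [_]; rewrite mem_iota add0n => i_lt.
by rewrite mderivX mnm1E eq_sym yvar_neq_zvar // mulr0n scale0r mulr0.
Qed.

Lemma zy_deriv_yvar j : (j < n)%N -> zy_deriv 'X_(yvar j) = 'X_(zvar j) * 'X_(yvar j).
Proof.
move=> j_lt; rewrite /zy_deriv (bigD1_seq j) ?mem_iota ?iota_uniq //= big1_seq ?addr0.
  rewrite mderivX mnm1E eqxx scale1r (_ : (_ - _)%MM = 0%MM) ?mpolyX0 ?mulr1 //.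
  by apply/mnmP => i; rewrite mnmBE mnm0E subnn.
move=> i /andP [i_neq]; rewrite mem_iota add0n => i_lt.
by rewrite mderivX mnm1E eq_yvar // eq_sym (negbTE i_neq) mulr0n scale0r mulr0.
Qed.

Definition novikov_model : algebra K := novikov_of_derivation zy_deriv.

Lemma novikov_modelP : novikov novikov_model.
Proof. exact: novikov_of_derivationP zy_derivM. Qed.

Definition zsum L : {mpoly K[nvars]} := \sum_(j <- L) 'X_(zvar j).

Lemma zsum_cat L1 L2 : zsum (L1 ++ L2) = zsum L1 + zsum L2.
Proof. exact: big_cat. Qed.

Lemma zy_deriv_zsum L : all (fun j => j < n)%N L -> zy_deriv (zsum L) = 0.
Proof.
move=> /allP L_lt; rewrite /zsum linear_sum big1_seq //= => j /L_lt.
exact: zy_deriv_zvar.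
Qed.

Definition nov_value (t : dterm) : {mpoly K[nvars]} :=
  meval (A := novikov_model) (fun j => 'X_(yvar j)) (to_pair t).2.

Lemma nov_value_prec t1 t2 :
  nov_value (DPrec t1 t2) = nov_value t1 * zy_deriv (nov_value t2).
Proof. by []. Qed.

Lemma nov_value_succ t1 t2 :
  nov_value (DSucc t1 t2) = nov_value t2 * zy_deriv (nov_value t1).
Proof. by []. Qed.

Lemma nov_value_deriv t : all (fun j => j < n)%N (dleaves t) ->
  zy_deriv (nov_value t) = zsum (dleaves t) * nov_value t.
Proof.
elim: t => [i|t1 IH1 t2 IH2|t1 IH1 t2 IH2] /=.
- by rewrite andbT => i_lt; rewrite /zsum big_seq1 zy_deriv_yvar.
- rewrite all_cat => /andP [lt1 lt2]; rewrite nov_value_prec IH2 // !zy_derivM.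
  by rewrite IH1 // IH2 // zy_deriv_zsum // zsum_cat; ring.
rewrite all_cat => /andP [lt1 lt2]; rewrite nov_value_succ IH1 // !zy_derivM.
by rewrite IH1 // IH2 // zy_deriv_zsum // zsum_cat; ring.
Qed.

Definition zsupported p L :=
  forall m, m \in msupp p -> forall j, (j < n)%N -> j \notin L -> m (zvar j) = 0%N.

Lemma zsupported_sub p L L' : {subset L <= L'} -> zsupported p L -> zsupported p L'.
Proof. by move=> sub_L p_L m m_p j j_lt jNL'; apply: p_L m_p j j_lt (contra (sub_L j) jNL'). Qed.

Lemma zsupportedD p q L : zsupported p L -> zsupported q L -> zsupported (p + q) L.
Proof. by move=> p_L q_L m /msuppD_le; rewrite mem_cat => /orP [/p_L | /q_L]. Qed.

Lemma zsupportedM p q L : zsupported p L -> zsupported q L -> zsupported (p * q) L.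
Proof.
move=> p_L q_L m /msuppM_le /allpairsP [[m1 m2] /= [m1_p m2_q ->]] j j_lt jNL.
by rewrite mnmDE (p_L _ m1_p) ?(q_L _ m2_q).
Qed.

Lemma zsupportedX (i : 'I_nvars) L :
  (forall j, (j < n)%N -> j \notin L -> i != zvar j) -> zsupported 'X_i L.
Proof.
move=> i_neq m; rewrite msuppX mem_seq1 => /eqP -> j j_lt jNL.
by rewrite mnm1E (negbTE (i_neq j j_lt jNL)).
Qed.

Lemma zsupported_zsum L : all (fun j => j < n)%N L -> zsupported (zsum L) L.
Proof.
elim: L => [_ m|i L IH /andP [i_lt L_lt]].
  by rewrite /zsum big_nil msupp0.
rewrite /zsum big_cons; apply: zsupportedD.
  apply: zsupportedX => j j_lt; rewrite in_cons negb_or => /andP [j_neq _].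
  by rewrite eq_zvar // eq_sym.
by apply: zsupported_sub (IH L_lt) => j j_L; rewrite in_cons j_L orbT.
Qed.

Lemma nov_value_zsupported t : all (fun j => j < n)%N (dleaves t) ->
  zsupported (nov_value t) (dleaves t).
Proof.
elim: t => [i|t1 IH1 t2 IH2|t1 IH1 t2 IH2] /=.
- by rewrite andbT => i_lt; apply: zsupportedX => j j_lt _; rewrite yvar_neq_zvar.
- rewrite all_cat => /andP [lt1 lt2]; rewrite nov_value_prec nov_value_deriv //.
  apply: zsupportedM; first exact: zsupported_sub (mem_subseq (prefix_subseq _ _)) (IH1 lt1).
  apply: zsupported_sub (mem_subseq (suffix_subseq _ _)) _.
  exact: zsupportedM (zsupported_zsum lt2) (IH2 lt2).
rewrite all_cat => /andP [lt1 lt2]; rewrite nov_value_succ nov_value_deriv //.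
apply: zsupportedM; first exact: zsupported_sub (mem_subseq (suffix_subseq _ _)) (IH2 lt2).
apply: zsupported_sub (mem_subseq (prefix_subseq _ _)) _.
exact: zsupportedM (zsupported_zsum lt1) (IH1 lt1).
Qed.

End NovikovModel.

Section ShiftProducts.
Variables (K : fieldType) (k : nat) (A : algebra K).
Implicit Types (p : {mpoly K[k]}) (G H : 'X_{1..k} -> A).

Definition shift_invariant G p :=
  forall m kappa, m \in msupp p -> G (kappa + m)%MM = G kappa.

Lemma mshift_amull G H p : shift_invariant G p ->
  mshift p (fun kappa => amul (G kappa) (H kappa)) =
  fun kappa => amul (G kappa) (mshift p H kappa).
Proof.
move=> G_inv; apply/funext => kappa; rewrite /mshift /mpair amul_sumr.
by apply: eq_big_seq => m m_p; rewrite G_inv // amulZr.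
Qed.

Lemma mshift_amulr G H p : shift_invariant G p ->
  mshift p (fun kappa => amul (H kappa) (G kappa)) =
  fun kappa => amul (mshift p H kappa) (G kappa).
Proof.
move=> G_inv; apply/funext => kappa; rewrite /mshift /mpair amul_suml.
by apply: eq_big_seq => m m_p; rewrite G_inv // amulZl.
Qed.

End ShiftProducts.

Section Realization.
Variables (K : fieldType) (n : nat) (A : algebra K).
Local Notation monomial := 'X_{1..nvars n}.
Implicit Types (p q : {mpoly K[nvars n]}) (F G H : monomial -> A) (L : seq nat).

Definition uniq_lt L := uniq L && all (fun j => j < n)%N L.

Lemma uniq_lt_cat L1 L2 : uniq_lt (L1 ++ L2) -> uniq_lt L1 /\ uniq_lt L2.
Proof.
by rewrite /uniq_lt cat_uniq all_cat => /andP [/and3P [-> _ ->] /andP [-> ->]].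
Qed.

Definition depends_only_on F L := forall kappa kappa' : monomial,
  {in L, forall j, kappa (zvar n j) = kappa' (zvar n j)} -> F kappa = F kappa'.

Lemma depends_only_on_mshift p F L :
  depends_only_on F L -> depends_only_on (mshift p F) L.
Proof.
move=> F_L kappa kappa' eq_kappa; rewrite /mshift; congr mpair.
by apply/funext => m; apply: F_L => j j_L; rewrite !mnmDE eq_kappa.
Qed.

Lemma shift_invariant_disjoint p G L1 L2 :
  zsupported p L2 -> depends_only_on G L1 -> all (fun j => j < n)%N L1 ->
  {in L1, forall j, j \notin L2} -> shift_invariant G p.
Proof.
move=> p_L2 G_L1 /allP L1_lt L1NL2 m kappa m_p; apply: G_L1 => j j_L1.
by rewrite mnmDE (p_L2 m m_p j (L1_lt j j_L1) (L1NL2 j j_L1)) addn0.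
Qed.

Lemma mshiftM_amul p q G H L1 L2 : uniq_lt (L1 ++ L2) ->
  zsupported p L1 -> zsupported q L2 -> depends_only_on G L1 -> depends_only_on H L2 ->
  mshift (p * q) (fun kappa => amul (G kappa) (H kappa)) =
  fun kappa => amul (mshift p G kappa) (mshift q H kappa).
Proof.
move=> /[dup] /andP [uniq_L _] /uniq_lt_cat [/andP [_ lt1] /andP [_ lt2]].
move=> p_L1 q_L2 G_L1 H_L2; rewrite mshiftM mshift_amull.
  rewrite mshift_amulr //; apply: shift_invariant_disjoint p_L1 _ lt2 _.
    exact: depends_only_on_mshift.
  by move=> j; apply: uniq_cat_notin; rewrite uniq_catC.
apply: shift_invariant_disjoint q_L2 G_L1 lt1 _.
by move=> j; apply: uniq_cat_notin.
Qed.

Variables (d : A -> A) (x : nat -> A).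

Definition shifted_x (kappa : monomial) : nat -> A :=
  fun j => iter (kappa (zvar n j)) d (x j).

Lemma shifted_x0 : shifted_x 0%MM = x.
Proof. by apply/funext => j; rewrite /shifted_x mnm0E. Qed.

Lemma shifted_xD_zvar kappa i j : (i < n)%N -> (j < n)%N ->
  shifted_x (kappa + U_(zvar n j))%MM i = derive_at d (shifted_x kappa) j i.
Proof.
move=> i_lt j_lt; rewrite /shifted_x /derive_at mnmDE mnm1E eq_zvar // eq_sym.
by case: eqP => [->|_]; rewrite ?addn1 ?addn0.
Qed.

Definition shifted_gen (j : nat) : fun_algebra A monomial :=
  fun kappa => shifted_x kappa j.

Definition var_value (t : dterm) : monomial -> A := meval shifted_gen (to_pair t).1.

Lemma var_value_prec t1 t2 :
  var_value (DPrec t1 t2) = fun kappa => amul (var_value t1 kappa) (var_value t2 kappa).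
Proof. by []. Qed.

Lemma var_value_succ t1 t2 :
  var_value (DSucc t1 t2) = fun kappa => amul (var_value t1 kappa) (var_value t2 kappa).
Proof. by []. Qed.

Lemma var_value_depends t : depends_only_on (var_value t) (dleaves t).
Proof.
move=> kappa kappa'; rewrite /var_value.
elim: t => [i|t1 IH1 t2 IH2|t1 IH1 t2 IH2] /= eq_kappa.
- by rewrite /shifted_gen /shifted_x eq_kappa ?mem_seq1.
- rewrite /fmul IH1 ?IH2 // => j j_t; apply: eq_kappa; by rewrite mem_cat j_t ?orbT.
rewrite /fmul IH1 ?IH2 // => j j_t; apply: eq_kappa; by rewrite mem_cat j_t ?orbT.
Qed.

Hypothesis derivation_d : derivation d.

Lemma derivation_shifted_deval kappa t : uniq_lt (dleaves t) ->
  d (deval d (shifted_x kappa) t) =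
  \sum_(j <- dleaves t) deval d (shifted_x (kappa + U_(zvar n j))%MM) t.
Proof.
case/andP => uniq_t /allP lt_t; rewrite deval_derivation //.
apply: eq_big_seq => j j_t; apply/esym/eq_deval => i i_t.
exact: shifted_xD_zvar (lt_t i i_t) (lt_t j j_t).
Qed.

Lemma mshift_zsum_var_value t : uniq_lt (dleaves t) ->
  mshift (nov_value K n t) (var_value t) = (fun kappa => deval d (shifted_x kappa) t) ->
  mshift (zsum K n (dleaves t) * nov_value K n t) (var_value t) =
  fun kappa => d (deval d (shifted_x kappa) t).
Proof.
move=> ok_t IH; rewrite mshiftM IH; apply/funext => kappa.
rewrite derivation_shifted_deval // /mshift /zsum linear_sum /=.
by apply: eq_bigr => j _; rewrite mpairX.
Qed.

Lemma mshift_nov_value t : uniq_lt (dleaves t) ->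
  mshift (nov_value K n t) (var_value t) = fun kappa => deval d (shifted_x kappa) t.
Proof.
elim: t => [i|t1 IH1 t2 IH2|t1 IH1 t2 IH2] /= ok_t.
- apply/funext => kappa; move: ok_t; rewrite /uniq_lt /= andbT => i_lt.
  by rewrite mshiftX /var_value /= /shifted_gen /shifted_x mnmDE mnm1E yvar_neq_zvar ?addn0.
- have [ok1 ok2] := uniq_lt_cat ok_t; move: (ok1) (ok2) => /andP [_ lt1] /andP [_ lt2].
  rewrite nov_value_prec nov_value_deriv // var_value_prec.
  rewrite (mshiftM_amul ok_t (nov_value_zsupported lt1)
    (zsupportedM (zsupported_zsum lt2) (nov_value_zsupported lt2))
    (@var_value_depends t1) (@var_value_depends t2)).
  by rewrite IH1 // mshift_zsum_var_value // IH2.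
have [ok1 ok2] := uniq_lt_cat ok_t; move: (ok1) (ok2) => /andP [_ lt1] /andP [_ lt2].
rewrite nov_value_succ nov_value_deriv // mulrC var_value_succ.
rewrite (mshiftM_amul ok_t (zsupportedM (zsupported_zsum lt1) (nov_value_zsupported lt1))
  (nov_value_zsupported lt2) (@var_value_depends t1) (@var_value_depends t2)).
by rewrite IH2 // mshift_zsum_var_value // IH1.
Qed.

End Realization.

Theorem mainTheorem12 (K : fieldType) (charK0 : [pchar K] =i pred0)
  (S : mpoly K -> Prop) (HS : multilinear_set S)
  (n : nat) (f : dpoly K) (Hf : dmultilinear n f) :
  VarNov_identity S f -> derived_identity S f.
Proof.
move=> VarNov_f A d A_S der_d x.
pose B (F : fun_algebra A 'X_{1..nvars n}) (p : novikov_model K n) := mpair F p.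
have B_bilinear : bilinear_map B by split=> *; rewrite /B ?mpairDl ?linearP.
rewrite -[RHS](VarNov_f _ _ _ B (@fun_algebra_in_variety _ _ _ _ A_S) (novikov_modelP K n)
  B_bilinear (shifted_gen d x) (fun j => 'X_(yvar n j))).
apply: (eq_big_all Hf) => p /= perm_p; congr (_ *: _).
have ok_p : uniq_lt n (dleaves p.2).
  rewrite /uniq_lt (perm_uniq perm_p) iota_uniq; apply/allP => j.
  by rewrite (perm_mem perm_p) mem_iota.
by rewrite /B -mshift_at0 mshift_nov_value // shifted_x0.
Qed.
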